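(* Let $K\ge 3$, $d\in\mathbb{N}$, $\eta>0$, and for each $k\in[K]=\{1,\dots,K\}$ let $n_k\in\mathbb{N}$ and points $x^k_1,\dots,x^k_{n_k}\in\mathbb{R}^d$ be given. Indices of marginals are taken cyclically: $K+1$ means $1$ and $0$ means $K$. For $\ell,t\in[K]$ define $\mathcal{K}^{(\ell,t)}\in\mathbb{R}^{n_\ell\times n_t}$ by $\mathcal{K}^{(\ell,t)}_{i,j}=\exp\!\big(-\tfrac1\eta\|x^\ell_i-x^t_j\|_2^2\big)$. Let $\mathcal{K}\in\mathbb{R}^{n_1\times\cdots\times n_K}$ be given by $\mathcal{K}_{i_1,\dots,i_K}=\exp\!\big(-\tfrac1\eta\sum_{k=1}^{K}\|x^k_{i_k}-x^{k+1}_{i_{k+1}}\|_2^2\big)=\prod_{k=1}^K\mathcal{K}^{(k,k+1)}_{i_k,i_{k+1}}$, let $\phi^k\in\mathbb{R}^{n_k}$, $k\in[K]$, be arbitrary vectors and $\Phi_{i_1,\dots,i_K}=\prod_{k=1}^K\phi^k_{i_k}$. For distinct $\ell,t\in[K]$ let $d(\ell,t)=t-\ell$ if $t\ge\ell$ and $d(\ell,t)=K-\ell+t$ otherwise, and define $\alpha^{(\ell,t)}\in\mathbb{R}^{n_\ell\times n_t}$ recursively by $\alpha^{(\ell,t)}=\mathcal{K}^{(\ell,t)}$ if $d(\ell,t)=1$ and $\alpha^{(\ell,t)}=\mathcal{K}^{(\ell,\ell+1)}\big(\phi^{\ell+1}\odot\alpha^{(\ell+1,t)}\big)$ otherwise.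 Define $\lambda^{(1,k)}\in\mathbb{R}^{n_1\times n_k}$ for $k=2,\dots,K$ by $\lambda^{(1,2)}=\mathcal{K}^{(1,2)}$ and $\lambda^{(1,k)}=\lambda^{(1,k-1)}\big(\phi^{k-1}\odot\mathcal{K}^{(k-1,k)}\big)$ for $k=3,\dots,K$. Then $$P_k(\mathcal{K}\odot\Phi)=\begin{cases}\phi^1\odot\big\langle\mathcal{K}^{(1,2)},\big(\phi^2\odot\alpha^{(2,1)}\big)^{\intercal}\big\rangle, & k=1,\\[2pt] \phi^k\odot\big\langle\alpha^{(k,1)},\big(\phi^1\odot\lambda^{(1,k)}\big)^{\intercal}\big\rangle, & k=2,\dots,K.\end{cases}$$
   Context: $P_k$ denotes the $k$-th marginal projection of a tensor $T\in\mathbb{R}^{n_1\times\cdots\times n_K}$: $[P_k(T)]_{i}=\sum T_{i_1,\dots,i_K}$, the sum over all $i_\ell\in[n_\ell]$, $\ell\neq k$, with $i_k=i$ fixed. $\odot$ between tensors of equal size (and between vectors) is the entrywise product; for a vector $v\in\mathbb{R}^n$ and a matrix $A\in\mathbb{R}^{n\times m}$, $v\odot A$ is the matrix with entries $v_iA_{ij}$. For matrices $G,H\in\mathbb{R}^{n\times m}$, $\langle G,H\rangle\in\mathbb{R}^n$ denotes the inner product along the second dimension: $\langle G,H\rangle_i=\sum_{j=1}^m G_{ij}H_{ij}$. *)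

From HB Require Import structures.
From mathcomp Require Import all_boot all_order all_algebra.
From mathcomp Require Import reals.
From mathcomp Require Import sequences exp.
Set Implicit Arguments. Unset Strict Implicit. Unset Printing Implicit Defensive.
Import Order.TTheory GRing.Theory Num.Theory.
Local Open Scope ring_scope.

(* Marginals are indexed 0-based by 'I_K; the paper's marginal j corresponds
   to the ordinal j-1.  Cyclic successor / predecessor are ordS / ord_pred. *)
Section Defs.
Variables (R : realType) (K d : nat) (eta : R) (n : 'I_K -> nat).
Variable x : forall k : 'I_K, 'I_(n k) -> 'rV[R]_d.
Variable phi : forall k : 'I_K, 'I_(n k) -> R.

Definition sqdist (u v : 'rV[R]_d) : R := \sum_(c < d) (u 0 c - v 0 c) ^+ 2.

Definition Kmat (l t : 'I_K) : 'M[R]_(n l, n t) :=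
  \matrix_(i, j) expR (- (1 / eta) * sqdist (@x l i) (@x t j)).

Definition rowscale (m p : nat) (v : 'I_m -> R) (A : 'M[R]_(m, p)) : 'M[R]_(m, p) :=
  \matrix_(i, j) (v i * A i j).

Definition inner_rows (m p : nat) (G H : 'M[R]_(m, p)) (i : 'I_m) : R :=
  \sum_(j < p) G i j * H i j.

Definition cdist (l t : 'I_K) : nat :=
  if (l <= t)%N then (t - l)%N else (K - l + t)%N.

Fixpoint alphaF (m : nat) (l t : 'I_K) : 'M[R]_(n l, n t) :=
  match m with
  | m1.+1 => if m1 is _.+1
             then Kmat l (ordS l) *m rowscale (@phi (ordS l)) (alphaF m1 (ordS l) t)
             else Kmat l t
  | 0%N => Kmat l t
  end.
Definition alpha (l t : 'I_K) : 'M[R]_(n l, n t) := alphaF (cdist l t) l t.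

Fixpoint lambdaF (m : nat) (s t : 'I_K) : 'M[R]_(n s, n t) :=
  match m with
  | m1.+1 => if m1 is _.+1
             then lambdaF m1 s (ord_pred t) *m
                  rowscale (@phi (ord_pred t)) (Kmat (ord_pred t) t)
             else Kmat s t
  | 0%N => Kmat s t
  end.
Definition lambda (s t : 'I_K) : 'M[R]_(n s, n t) := lambdaF (cdist s t) s t.

Definition midx := {dffun forall k : 'I_K, 'I_(n k)}.

Definition Ktens (I : midx) : R :=
  expR (- (1 / eta) * \sum_(k < K) sqdist (@x k (I k)) (@x (ordS k) (I (ordS k)))).

Definition Phitens (I : midx) : R := \prod_(k < K) @phi k (I k).

Definition marg (T : midx -> R) (k : 'I_K) (i : 'I_(n k)) : R :=
  \sum_(I : midx | I k == i) T I.

End Defs.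
Arguments marg [R K n] T k i.

(* Write M^s for the matrix phi^s (.) K^(s,s+1).  An entry of K (.) Phi is the
   product of the entries M^s_(i_s, i_(s+1)) around the cycle, so summing out
   the free indices of an arc one at a time is matrix multiplication, and the
   k-th marginal at i is the (i, i) entry of the cyclic product
   M^k M^(k+1) ... M^(k-1).  Both alpha^(l,t) and lambda^(l,t) are the product
   of the M^s along the arc from l to t with the leading factor phi^l removed
   (they only associate the product differently), and splitting the cycle at
   any marginal p != k gives the formula. *)
From Pilot Require Import Defs.
From HB Require Import structures.
From mathcomp Require Import all_boot all_order all_algebra.
From mathcomp Require Import reals.
From mathcomp Require Import sequences exp.
From mathcomp Require Import zify.
Import Order.TTheory GRing.Theory Num.Theory.

Section CyclicDistance.
Context {K : nat}.
Implicit Types l c : 'I_K.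

Lemma iter_ordS_val l j : iter j (@ordS K) l = (l + j) %% K :> nat.
Proof.
elim: j => [|j IH]; first by rewrite addn0 modn_small.
by rewrite iterS /= IH -addn1 modnDml addn1 addnS.
Qed.

Lemma iter_ordS_inj l : injective (fun j : 'I_K => iter j (@ordS K) l).
Proof.
move=> i j /(congr1 val) /eqP; rewrite /= !iter_ordS_val eqn_modDl.
by rewrite !modn_small // => /eqP /val_inj.
Qed.

Lemma iter_ordS_K l : iter K (@ordS K) l = l.
Proof. by apply: val_inj => /=; rewrite iter_ordS_val modnDr modn_small. Qed.

Lemma iter_cdist l c : iter (cdist l c) (@ordS K) l = c.
Proof.
apply: val_inj => /=; rewrite iter_ordS_val /cdist; case: (leqP l c) => lc.
  by rewrite subnKC // modn_small.
by rewrite addnA subnKC ?modnDl ?modn_small // ltnW.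
Qed.

Lemma cdist_lt l c : cdist l c < K.
Proof.
by have := ltn_ord l; have := ltn_ord c; rewrite /cdist; case: (leqP l c); lia.
Qed.

Lemma cdist_iter l j : j < K -> cdist l (iter j (@ordS K) l) = j.
Proof.
move=> jK; pose c := iter j (@ordS K) l.
have := @iter_ordS_inj l (Ordinal (cdist_lt l c)) (Ordinal jK).
by rewrite /= iter_cdist => /(_ erefl) [].
Qed.

Lemma cdistxx l : cdist l l = 0.
Proof. by rewrite /cdist leqnn subnn. Qed.

Lemma cdist_eq0 l c : (cdist l c == 0) = (c == l).
Proof.
apply/eqP/eqP => [d0|->]; last exact: cdistxx.
by rewrite -(iter_cdist l c) d0.
Qed.

Lemma cdist_ordS l c : c != l -> cdist (ordS l) c = (cdist l c).-1.
Proof.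
rewrite -cdist_eq0; move: (iter_cdist l c) (cdist_lt l c).
case: (cdist l c) => // j <- jK _.
by rewrite iterSr cdist_iter // ltnW.
Qed.

Lemma cdist_ordSl l : cdist (ordS l) l = K.-1.
Proof.
have K0 : 0 < K := leq_ltn_trans (leq0n l) (ltn_ord l).
have lE : iter K.-1 (@ordS K) (ordS l) = l.
  by rewrite -iterSr prednK // iter_ordS_K.
by rewrite -{2}lE cdist_iter // prednK.
Qed.

Lemma cdist_lordS l : 1 < K -> cdist l (ordS l) = 1.
Proof. exact: cdist_iter l 1. Qed.

Lemma cdist_add l c : c != l -> cdist l c + cdist c l = K.
Proof.
move=> /eqP cl; have {}cl : (c : nat) <> l by move=> e; apply/cl/val_inj.
have := ltn_ord l; have := ltn_ord c; rewrite /cdist.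
by case: (leqP l c); case: (leqP c l); lia.
Qed.

Definition open_arc l m := [set c | 0 < cdist l c < m].

Lemma open_arc1 l : open_arc l 1 = set0.
Proof. by apply/setP => c; rewrite !inE; lia. Qed.

Lemma open_arc_cycle l : open_arc l K = ~: [set l].
Proof. by apply/setP => c; rewrite !inE cdist_lt andbT lt0n cdist_eq0. Qed.

Lemma open_arc_ordS l m : m.+2 <= K ->
  open_arc l m.+2 = ordS l |: open_arc (ordS l) m.+1.
Proof.
move=> mK; apply/setP => c; rewrite !inE.
case: (eqVneq c l) => [->|cl].
  by rewrite cdistxx cdist_ordSl eq_sym -cdist_eq0 cdist_lordS //; lia.
case: (eqVneq c (ordS l)) => [->|cS]; first by rewrite cdist_lordS //; lia.
have c0 : cdist l c != 0 by rewrite cdist_eq0.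
have c1 : cdist l c != 1.
  by apply: contra_neq cS => c1; rewrite -(iter_cdist l c) c1.
by rewrite cdist_ordS //; lia.
Qed.

End CyclicDistance.

Local Open Scope ring_scope.

Section MultiIndices.
Context {K : nat} {n : 'I_K -> nat}.
Implicit Types (W : {set 'I_K}) (I J : midx n).

Definition agree W I J : bool := [forall k, (k \notin W) ==> (J k == I k)].

Definition upd I (s : 'I_K) (a : 'I_(n s)) : midx n :=
  @finfun _ (fun k => 'I_(n k)) (dfwith (fun k => I k) a).

Lemma upd_eq I s a : upd I s a s = a.
Proof. by rewrite ffunE dfwith_in. Qed.

Lemma upd_neq I s (a : 'I_(n s)) k : s != k -> upd I s a k = I k.
Proof. by move=> sk; rewrite ffunE dfwith_out. Qed.

Lemma agree_outside {W I J k} : agree W I J -> k \notin W -> J k = I k.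
Proof. by move=> /forallP/(_ k)/implyP h /h/eqP. Qed.

Lemma agree_set0 I J : agree set0 I J = (J == I).
Proof.
apply/forallP/eqP => [h|-> k]; last by rewrite eqxx implybT.
by apply/ffunP => k; apply/eqP/(implyP (h k)); rewrite inE.
Qed.

Lemma agree_setC1 k I J : agree (~: [set k]) I J = (J k == I k).
Proof.
apply/forallP/eqP => [h|Jk c].
  by apply/eqP/(implyP (h k)); rewrite !inE negbK.
by apply/implyP; rewrite !inE negbK => /eqP ->; apply/eqP.
Qed.

Lemma sum_agree_setU1 (V : nmodType) W s I (f : midx n -> V) : s \notin W ->
  \sum_(J | agree (s |: W) I J) f J =
  \sum_(a : 'I_(n s)) \sum_(J | agree W (upd I s a) J) f J.
Proof.
move=> sW; rewrite (partition_big (fun J : midx n => J s) predT) //=.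
apply: eq_bigr => a _; apply: eq_bigl => J.
apply/andP/forallP => [[/forallP h /eqP Js] k|h].
  apply/implyP => kW; case: (eqVneq s k) => [<-|sk]; first by rewrite upd_eq Js.
  by rewrite upd_neq //; apply/(implyP (h k)); rewrite !inE negb_or eq_sym sk.
split; last by rewrite (eqP (implyP (h s) sW)) upd_eq.
apply/forallP => k; apply/implyP; rewrite !inE negb_or => /andP[sk kW].
by rewrite (eqP (implyP (h k) kW)) upd_neq // eq_sym.
Qed.

End MultiIndices.

Section Marginals.
Context {R : realType} {K d : nat} (eta : R) {n : 'I_K -> nat}.
Variable x : forall k : 'I_K, 'I_(n k) -> 'rV[R]_d.
Variable phi : forall k : 'I_K, 'I_(n k) -> R.

Local Notation Kmat := (Kmat eta x).
Local Notation alphaF := (alphaF eta x phi).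
Local Notation alpha := (alpha eta x phi).
Local Notation T := (fun J : midx n => Ktens eta x J * Phitens phi J).

Lemma rowscale_mulmx m p q (v : 'I_m -> R) (A : 'M_(m, p)) (B : 'M_(p, q)) :
  rowscale v (A *m B) = rowscale v A *m B.
Proof.
apply/matrixP => i j; rewrite !mxE big_distrr /=.
by apply: eq_bigr => k _; rewrite !mxE mulrA.
Qed.

Lemma alphaF_split a b l p t :
  (0 < a)%N -> (0 < b)%N -> p = iter a (@ordS K) l ->
  alphaF (a + b) l t = alphaF a l p *m rowscale (phi p) (alphaF b p t).
Proof.
case: a => // a _; case: b => // b _.
elim: a l => [|a IH] l p_def; first by rewrite p_def.
have -> : alphaF (a.+2 + b.+1) l t =
    Kmat l (ordS l) *m
    rowscale (phi (ordS l)) (alphaF (a.+1 + b.+1) (ordS l) t) by [].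
by rewrite (IH (ordS l)) -?iterSr // rowscale_mulmx mulmxA.
Qed.

Lemma lambdaF_alphaF m s t : t = iter m (@ordS K) s ->
  lambdaF eta x phi m s t = alphaF m s t.
Proof.
elim: m t => [|[|m] IH] t t_def //.
have pred_t : ord_pred t = iter m.+1 (@ordS K) s by rewrite t_def /= ordSK.
have -> : alphaF m.+2 s t = alphaF (m.+1 + 1) s t by rewrite addn1.
by rewrite (alphaF_split _ _ _ _ _ _ _ pred_t) // -(IH _ pred_t).
Qed.

Lemma lambda_alpha s t : lambda eta x phi s t = alpha s t.
Proof. exact/lambdaF_alphaF/esym/iter_cdist. Qed.

Lemma alpha_ordS l : (1 < K)%N -> alpha l (ordS l) = Kmat l (ordS l).
Proof. by move=> K1; rewrite /alpha cdist_lordS. Qed.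

Lemma alphaF_cycle k p : p != k ->
  alphaF K k k = alpha k p *m rowscale (phi p) (alpha p k).
Proof.
move=> pk; have -> : alphaF K k k = alphaF (cdist k p + cdist p k) k k.
  by rewrite cdist_add.
by rewrite (alphaF_split _ _ _ _ _ _ _ (esym (iter_cdist k p))) //
  lt0n cdist_eq0 // eq_sym.
Qed.

Definition edge_weight (J : midx n) (s : 'I_K) : R :=
  phi s (J s) * Kmat s (ordS s) (J s) (J (ordS s)).

Lemma tensor_edge_weight k (J : midx n) :
  Ktens eta x J * Phitens phi J =
  \prod_(j < K) edge_weight J (iter j (@ordS K) k).
Proof.
transitivity (\prod_(s < K) edge_weight J s).
  rewrite /Ktens /Phitens mulr_sumr expR_sum -big_split.
  by apply: eq_bigr => s _; rewrite /edge_weight /Defs.Kmat mxE /= mulrC.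
exact: reindex_inj (iter_ordS_inj k).
Qed.

(* Induction on the length of the arc, peeling off its first edge as in the
   recursion defining [alphaF]. *)
Lemma sum_path_weight m l t (I : midx n) :
  (0 < m <= K)%N -> t = iter m (@ordS K) l ->
  \sum_(J | agree (open_arc l m) I J)
     \prod_(j < m) edge_weight J (iter j (@ordS K) l)
  = phi l (I l) * alphaF m l t (I l) (I t).
Proof.
case: m => // m /andP[_]; elim: m l t I => [|m IH] l t I mK ->.
  under eq_bigl do rewrite open_arc1 agree_set0.
  by rewrite big_pred1_eq big_ord1.
have K1 : (1 < K)%N by apply: leq_trans mK.
have lS : ordS l != l by rewrite -cdist_eq0 cdist_lordS.
have Sl_out : ordS l \notin open_arc (ordS l) m.+1 by rewrite inE cdistxx.
have l_out : l \notin open_arc (ordS l) m.+1 by rewrite inE cdist_ordSl; lia.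
have tS : iter m.+2 (@ordS K) l != ordS l.
  by rewrite iterSr -cdist_eq0 cdist_iter.
have -> : alphaF m.+2 l (iter m.+2 (@ordS K) l) = Kmat l (ordS l) *m
    rowscale (phi (ordS l)) (alphaF m.+1 (ordS l) (iter m.+2 (@ordS K) l)) by [].
rewrite open_arc_ordS // sum_agree_setU1 // mxE mulr_sumr.
apply: eq_bigr => a _.
transitivity (phi l (I l) * Kmat l (ordS l) (I l) a *
  \sum_(J | agree (open_arc (ordS l) m.+1) (upd I (ordS l) a) J)
     \prod_(j < m.+1) edge_weight J (iter j (@ordS K) (ordS l))).
  rewrite big_distrr; apply: eq_bigr => J hJ.
  rewrite big_ord_recl; congr (_ * _).
    rewrite /edge_weight (agree_outside hJ Sl_out) (agree_outside hJ l_out).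
    by rewrite upd_eq upd_neq.
  by apply: eq_bigr => j _; rewrite lift0 iterSr.
rewrite (IH _ _ _ (ltnW mK) (iterSr _ _ _)) upd_eq upd_neq 1?eq_sym //.
by rewrite !mxE !mulrA.
Qed.

Lemma marg_cycle k i : marg T k i = phi k i * alphaF K k k i i.
Proof.
have K0 : (0 < K)%N := leq_ltn_trans (leq0n k) (ltn_ord k).
case: (boolP [forall s, 0 < n s]%N) => [/forallP n_pos | /forallPn[s0 ns0]].
  pose I1 := @finfun _ (fun s => 'I_(n s)) (fun s => Ordinal (n_pos s)).
  pose I0 := upd I1 k i.
  rewrite /marg (eq_bigl (agree (open_arc k K) I0)) => [|J]; last first.
    by rewrite open_arc_cycle agree_setC1 upd_eq.
  under eq_bigr do rewrite (tensor_edge_weight k).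
  rewrite (sum_path_weight _ _ _ _ _ (esym (iter_ordS_K k))) ?upd_eq //.
  by rewrite K0 leqnn.
(* No multi-index exists; the right side vanishes too, since the cycle passes
   through the empty marginal [s0]. *)
have s0k : s0 != k.
  by apply: contraNneq ns0 => ->; exact: leq_ltn_trans (leq0n i) (ltn_ord i).
rewrite /marg big1 => [|J _]; last by have := ltn_ord (J s0); lia.
rewrite (alphaF_cycle k s0 s0k) mxE big1 ?mulr0 // => c _.
by have := ltn_ord c; lia.
Qed.

Lemma marg_split k p i : p != k ->
  marg T k i =
  phi k i * inner_rows (alpha k p) (rowscale (phi p) (alpha p k))^T i.
Proof.
move=> pk; rewrite marg_cycle (alphaF_cycle k p pk) mxE; congr (_ * _).
by apply: eq_bigr => j _; rewrite !mxE.
Qed.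

End Marginals.

Theorem theorem4 (R : realType) (K d : nat) (hK : (3 <= K)%N) (eta : R)
    (heta : 0 < eta) (n : 'I_K -> nat)
    (x : forall k : 'I_K, 'I_(n k) -> 'rV[R]_d)
    (phi : forall k : 'I_K, 'I_(n k) -> R)
    (o : 'I_K) (ho : nat_of_ord o = 0%N) :
  let T := fun I : midx n => Ktens eta x I * Phitens phi I in
  (forall i : 'I_(n o),
     marg T o i =
     phi o i * inner_rows (Kmat eta x o (ordS o))
                 (rowscale (phi (ordS o)) (alpha eta x phi (ordS o) o))^T i)
  /\
  (forall (k : 'I_K), k != o -> forall i : 'I_(n k),
     marg T k i =
     phi k i * inner_rows (alpha eta x phi k o)
                 (rowscale (phi o) (lambda eta x phi o k))^T i).
Proof.
move=> T; have K1 : (1 < K)%N := ltnW hK.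
split => [i|k ko i].
  rewrite (marg_split eta x phi o (ordS o) i) ?alpha_ordS //.
  by rewrite -cdist_eq0 cdist_lordS.
by rewrite (marg_split eta x phi k o i) ?lambda_alpha // eq_sym.
Qed.
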